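(* Let $X$ be a Banach space and $Y$ a normed space over $K$, $M>0$, $F:X\to Y$ a map, and $\{F_n\}$ a sequence of continuous $M$-contraction operators from $X$ into $Y$ such that $F_n(x)\to F(x)$ in norm for every $x\in X$. If there is a positive constant $L$ with $\|F_n(x_1+x_2)\|_Y\le L\|F_n(x_1)+F_n(x_2)\|_Y$ for every $n$ and all $x_1,x_2\in X$, then $\{F_n\}$ is uniformly norm bounded (there is $c>0$ with $\|F_n\|_{B(X,Y)}\le c$ for all $n$) and $F\in B(X,Y)$.
   Context: $K$ is $\mathbb{R}$ or $\mathbb{C}$; operators are arbitrary maps. $\|F\|_{B(X,Y)}=\max\left(\sup_{x\neq0,x\in X}\frac{\|F(x)\|_Y}{\|x\|_X},\ \|F(0)\|_Y\right)$ and $B(X,Y)$ is the set of maps with this finite. $F$ is an $M$-contraction operator if $\|F(kx)\|_Y\le M|k|\,\|F(x)\|_Y$ for every scalar $k\neq0$ and every $x\neq0$. *)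

From mathcomp Require Import all_boot all_order all_algebra.
From mathcomp Require Import all_classical all_reals all_analysis.
From mathcomp Require Export complex.
Import Order.TTheory GRing.Theory Num.Theory.
Import numFieldNormedType.Exports.

Set Implicit Arguments.
Unset Strict Implicit.
Unset Printing Implicit Defensive.

Local Open Scope ring_scope.
Local Open Scope classical_set_scope.

(* ||F||_{B(X,Y)} <= c, literally:
   max( sup_{x <> 0} ||F x|| / ||x|| , ||F 0|| ) <= c *)
Definition opnorm_le (K : numFieldType) (X Y : normedModType K)
    (F : X -> Y) (c : K) : Prop :=
  (forall x : X, x != 0 -> `|F x| / `|x| <= c) /\ `|F 0| <= c.

Definition in_B (K : numFieldType) (X Y : normedModType K) (F : X -> Y) : Prop :=
  exists c : K, opnorm_le F c.

Definition M_contraction (K : numFieldType) (X Y : normedModType K)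
    (M : K) (F : X -> Y) : Prop :=
  forall (k : K) (x : X), k != 0 -> x != 0 -> `|F (k *: x)| <= M * `|k| * `|F x|.

Definition corollary1_stmt (K : numFieldType) : Prop :=
  forall (X : completeNormedModType K) (Y : normedModType K)
         (M : K) (F : X -> Y) (Fn : nat -> X -> Y),
    0 < M ->
    (forall n, continuous (Fn n)) ->
    (forall n, M_contraction M (Fn n)) ->
    (forall x : X, (fun n => Fn n x) @ \oo --> F x) ->
    forall L : K, 0 < L ->
    (forall n (x1 x2 : X), `|Fn n (x1 + x2)| <= L * `|Fn n x1 + Fn n x2|) ->
    (exists c : K, 0 < c /\ forall n, opnorm_le (Fn n) c) /\ in_B F.

From mathcomp Require Import all_boot all_order all_algebra.
From mathcomp Require Import all_classical all_reals all_analysis.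
From mathcomp Require Import complex.
From mathcomp Require Import ring.
Import Order.TTheory GRing.Theory Num.Theory.
Import numFieldNormedType.Exports.
Set Implicit Arguments.
Unset Strict Implicit.
Unset Printing Implicit Defensive.
Local Open Scope ring_scope.
Local Open Scope classical_set_scope.

(* The sets A_m = {x | forall n, |F_n x| <= m} are closed and, by pointwise
   convergence, cover X; by Baire's theorem one of them contains a ball
   B(x0, r).  Quasi-additivity applied to z = (z + x0) + (- x0) moves the bound
   to the ball B(0, r), and the M-contraction property rescales it to the
   bound |F_n x| <= c |x| on all of X.  A bound valid for every F_n passes to
   the pointwise limit F. *)

Lemma realType_archimedean (R : realType) : Num.archimedean_axiom R.
Proof. by move=> x; exists (Num.bound `|x|); exact: archi_boundP. Qed.

Lemma complex_archimedean (R : realType) : Num.archimedean_axiom R[i].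
Proof.
move=> x; have /andP[/eqP Im_x Re_x] : 0 <= `|x| by rewrite normr_ge0.
have [n n_gt] := realType_archimedean (complex.Re `|x|).
exists n; have -> : n%:R = (n%:R)%:C%C :> R[i] by rewrite rmorph_nat.
rewrite ltcE /= -Im_x eqxx /=.
by apply: le_lt_trans n_gt; apply: ler_norm.
Qed.

Lemma archimedean_inv_lt (K : numFieldType) : Num.archimedean_axiom K ->
  forall e : K, 0 < e -> exists n : nat, n.+1%:R^-1 < e.
Proof.
move=> archi e e0; have [n en] := archi e^-1.
exists n; rewrite invf_plt ?posrE ?ltr0Sn //.
by rewrite gtr0_norm ?invr_gt0 // in en; rewrite (lt_trans en) // ltr_nat.
Qed.

(* mathcomp-analysis' [Baire] needs a realType of scalars, which excludes R[i]. *)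
Section Baire.
Variables (R : numFieldType) (T : completePseudoMetricType R).

Lemma closed_ball_avoiding (A : set T) (x : T) (r e : R) :
  closed A -> 0 < r -> 0 < e -> ~ ball x (r / 2) `<=` A ->
  exists y s, [/\ 0 < s, s <= e & closed_ball y s `<=` ball x r `&` ~` A].
Proof.
move=> Acl r0 e0 /existsNP[y /not_implyP[xy Ay]].
have : nbhs y (ball x r `&` ~` A).
  apply: filterI; last by apply: open_nbhs_nbhs; split; rewrite ?openC.
  apply: filterS (nbhsx_ballx y (r / 2) _); last by rewrite divr_gt0.
  by move=> z /(ball_triangle xy); rewrite -splitr.
move=> /nbhs_ballP[t /= t0 tA].
have cmp : t >=< e := real_comparable (gtr0_real t0) (gtr0_real e0).
have m0 : 0 < Num.min t e by rewrite comparable_lt_min // t0 e0.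
exists y, (Num.min t e / 2); split; first by rewrite divr_gt0.
  apply: le_trans (_ : Num.min t e <= e); last by rewrite comparable_ge_min // lexx orbT.
  by rewrite ler_pdivrMr // ler_pMr // ler1n.
apply: subset_trans tA => z /(subset_closure_half m0).
by apply: le_ball; rewrite comparable_ge_min // lexx.
Qed.

Lemma nested_closed_balls_meet (a : nat -> T) (r : nat -> R) :
  (forall n, 0 < r n) -> (forall e, 0 < e -> exists n, r n < e) ->
  (forall n, closed_ball (a n.+1) (r n.+1) `<=` closed_ball (a n) (r n)) ->
  exists l, forall n, closed_ball (a n) (r n) l.
Proof.
move=> r_pos r_small nested.
have nested_add n k :
    closed_ball (a (n + k)%N) (r (n + k)%N) `<=` closed_ball (a n) (r n).
  elim: k => [|k IH]; first by rewrite addn0.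
  by rewrite addnS; apply: subset_trans IH.
have a_in n : \forall m \near \oo, closed_ball (a n) (r n) (a m).
  exists n => // m /= nm; rewrite -(subnKC nm).
  exact/nested_add/closed_ballxx.
have : cvg (a @ \oo).
  apply: cauchy_cvg; apply: cauchy_exP => e e0.
  have [n rn] := r_small (e / 2) (divr_gt0 e0 (ltr0Sn _ 1)).
  exists (a n); apply: filterS (a_in n) => m.
  by move=> /(le_closed_ball (ltW rn)) /(subset_closure_half e0).
move=> /cvg_ex[l al]; exists l => n.
exact: (closed_cvg _ (@closed_ball_closed _ _ _ _) (a_in n) l al).
Qed.

Lemma Baire_closed_cover (A : nat -> set T) : Num.archimedean_axiom R ->
  (forall m, closed (A m)) -> (forall x, exists m, A m x) ->
  exists m x r, 0 < r /\ ball x r `<=` A m.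
Proof.
move=> archi Acl Acov; apply: contrapT => no_interior.
have step (p : nat * (T * R)) : exists q : T * R, 0 < p.2.2 ->
    [/\ 0 < q.2, q.2 <= p.1.+1%:R^-1
       & closed_ball q.1 q.2 `<=` ball p.2.1 p.2.2 `&` ~` A p.1].
  case: p => m [x r] /=; have [r0|_] := boolP (0 < r); last by exists (x, r).
  have e0 : 0 < m.+1%:R^-1 :> R by rewrite invr_gt0.
  have [|y [s hs]] := @closed_ball_avoiding (A m) x r _ (Acl m) r0 e0.
    by move=> sub; apply: no_interior; exists m, x, (r / 2); rewrite divr_gt0.
  by exists (y, s).
have [f hf] := choice step.
pose fix ar n := if n is m.+1 then f (m, ar m) else (point, 1).
have r_pos n : 0 < (ar n).2.
  by elim: n => [|n IH]; [exact: ltr01 | have [] := hf (n, ar n) IH].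
have ar_step n := hf (n, ar n) (r_pos n).
have [l l_in] : exists l, forall n, closed_ball (ar n).1 (ar n).2 l.
  apply: nested_closed_balls_meet r_pos _ _ => [e e0|n].
    have [n ne] := archimedean_inv_lt archi e0.
    by exists n.+1; have [_ + _] := ar_step n => /le_lt_trans; apply.
  by have [_ _ /subset_trans] := ar_step n; apply => z [/subset_closed_ball].
have [m Aml] := Acov l.
by have [_ _ /(_ l (l_in m.+1)) []] := ar_step m.
Qed.

End Baire.

Section NormedBounds.
Variables (K : numFieldType) (V : normedModType K).

Lemma closed_norm_le (c : K) : 0 <= c -> closed [set y : V | `|y| <= c].
Proof.
move=> c0; rewrite -openC openE => y /= yc.
have cy : c < `|y| by rewrite real_ltNge ?ger0_real //; apply/negP.
apply/nbhs_ballP; exists (`|y| - c); first by rewrite /= subr_gt0.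
move=> z; rewrite -ball_normE /= => yz zc.
have := ltr_leD yz zc; rewrite subrK.
by have := ler_distD z y 0; rewrite !subr0 => /le_lt_trans/[apply]; rewrite ltxx.
Qed.

Lemma cvg_norm_le (u : nat -> V) (l : V) (c : K) :
  0 <= c -> u @ \oo --> l -> (forall n, `|u n| <= c) -> `|l| <= c.
Proof.
move=> c0 ul ub.
by apply: (closed_cvg _ (closed_norm_le c0) _ l ul); apply: nearW.
Qed.

Lemma cvg_bounded_nat (u : nat -> V) (l : V) : Num.archimedean_axiom K ->
  u @ \oo --> l -> exists m : nat, forall n, `|u n| <= m%:R.
Proof.
move=> archi ul; have [M [Mreal HM]] := cvg_seq_bounded (cvgP _ ul).
have [m Mm] := archi M.
exists m => n; apply: (HM _ _ n I).
exact: le_lt_trans (real_ler_norm Mreal) Mm.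
Qed.

End NormedBounds.

Section OperatorBounds.
Variables (K : numFieldType) (X Y : normedModType K).

Lemma quasi_additive_ball_bound (F : X -> Y) (L : K) (x0 : X) (r m B : K) :
  0 <= L -> (forall x1 x2, `|F (x1 + x2)| <= L * `|F x1 + F x2|) ->
  (forall z, ball x0 r z -> `|F z| <= m) -> `|F (- x0)| <= B ->
  forall z, `|z| < r -> `|F z| <= L * (m + B).
Proof.
move=> L0 F_quasi F_ball F_x0 z zr.
rewrite -[z](addrK x0); apply: le_trans (F_quasi _ _) _.
rewrite ler_wpM2l //; apply: le_trans (ler_normD _ _) (lerD _ F_x0).
by apply: F_ball; rewrite -ball_normE /= opprD addrCA subrr addr0 normrN.
Qed.

Lemma contraction_opnorm_bound (F : X -> Y) (M C r : K) :
  0 <= M -> 0 < r -> M_contraction M F -> (forall z, `|z| < r -> `|F z| <= C) ->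
  forall x, x != 0 -> `|F x| / `|x| <= M * C * (2 / r).
Proof.
move=> M0 r0 F_contr F_small x x_neq0.
have x_gt0 : 0 < `|x| by rewrite normr_gt0.
pose k := 2 * `|x| / r.
have k_gt0 : 0 < k by rewrite divr_gt0 // mulr_gt0.
have xE : x = k *: (k^-1 *: x) by rewrite scalerA divff ?lt0r_neq0 // scale1r.
have z_small : `|k^-1 *: x| < r.
  have -> : `|k^-1 *: x| = r / 2.
    by rewrite normrZ gtr0_norm ?invr_gt0 // /k; field; rewrite !lt0r_neq0.
  by rewrite ltr_pdivrMr // ltr_pMr // ltr1n.
have z_neq0 : k^-1 *: x != 0 by rewrite scaler_eq0 negb_or invr_eq0 lt0r_neq0.
rewrite ler_pdivrMr // [in leLHS]xE.
apply: le_trans (F_contr _ _ (lt0r_neq0 k_gt0) z_neq0) _.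
have -> : M * C * (2 / r) * `|x| = M * k * C by rewrite /k; field; rewrite lt0r_neq0.
by rewrite gtr0_norm // ler_wpM2l ?F_small // mulr_ge0 // ltW.
Qed.

Lemma opnorm_le_cvg (Fn : nat -> X -> Y) (F : X -> Y) (c : K) : 0 <= c ->
  (forall x, (fun n => Fn n x) @ \oo --> F x) -> (forall n, opnorm_le (Fn n) c) ->
  opnorm_le F c.
Proof.
move=> c0 Fn_cvg Fn_c; split => [x x_neq0|]; last first.
  by apply: (cvg_norm_le c0 (Fn_cvg 0)) => n; apply: (Fn_c n).2.
rewrite ler_pdivrMr ?normr_gt0 //.
apply: (cvg_norm_le _ (Fn_cvg x)) => [|n]; first by rewrite mulr_ge0.
by rewrite -ler_pdivrMr ?normr_gt0 //; apply: (Fn_c n).1.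
Qed.

End OperatorBounds.

Lemma uniformly_bounded_contractions (K : numFieldType) :
  Num.archimedean_axiom K -> corollary1_stmt K.
Proof.
move=> archi X Y M F Fn M0 Fn_cont Fn_contr Fn_cvg L L0 Fn_quasi.
pose A m := \bigcap_n (Fn n @^-1` [set y | `|y| <= m%:R]).
have A_closed m : closed (A m).
  apply: closed_bigI => n _; apply: preimage_closed; last exact: closed_norm_le.
  by move=> x _; apply: Fn_cont.
have A_cover x : exists m, A m x.
  have [m m_bound] := cvg_bounded_nat archi (Fn_cvg x).
  by exists m => n _; apply: m_bound.
have [m [x0 [r [r0 ball_A]]]] := Baire_closed_cover archi A_closed A_cover.
have [B B_bound] := cvg_bounded_nat archi (Fn_cvg (- x0)).
have [B0 B0_bound] := cvg_bounded_nat archi (Fn_cvg 0).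
pose C := L * (m%:R + B%:R).
have Fn_small n : forall z, `|z| < r -> `|Fn n z| <= C.
  apply: quasi_additive_ball_bound (ltW L0) (Fn_quasi n) _ (B_bound n).
  by move=> y /ball_A; apply.
pose c := M * C * (2 / r) + B0%:R + 1.
have C0 : 0 <= M * C * (2 / r).
  by rewrite /C !mulr_ge0 ?addr_ge0 ?invr_ge0 ?(ltW M0) ?(ltW L0) ?(ltW r0).
have c0 : 0 < c by rewrite /c ltr_wpDl ?addr_ge0.
have Fn_c n : opnorm_le (Fn n) c.
  split=> [x x_neq0|]; apply: le_trans (_ : _ <= c).
  - exact: contraction_opnorm_bound (ltW M0) r0 (Fn_contr n) (Fn_small n) x x_neq0.
  - by rewrite /c -addrA lerDl addr_ge0.
  - exact: B0_bound.
  - by rewrite /c addrAC lerDr addr_ge0.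
split; first by exists c.
by exists c; apply: opnorm_le_cvg (ltW c0) Fn_cvg Fn_c.
Qed.

Theorem corollary1 (R : realType) :
  corollary1_stmt R /\ corollary1_stmt (R[i])%C.
Proof.
split; apply: uniformly_bounded_contractions.
  exact: realType_archimedean.
exact: complex_archimedean.
Qed.
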